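(* Let $k\ge2$, $\alpha_1,\dots,\alpha_k\in[0,2\pi)$ and let $n_1,\dots,n_k$ be positive integers with $n_i\ne n_{i+1}$ for every $i\in\{1,\dots,k-1\}$. Then there exists $\phi\in[0,2\pi)$ such that $$V\big(\cos(\alpha_1+\phi n_1),\dots,\cos(\alpha_k+\phi n_k)\big)\ \ge\ \frac{k-1}{8}.$$
   Context: For real numbers $r_1,\dots,r_k$, $V(r_1,\dots,r_k):=|\{i\in\{1,\dots,k-1\}:r_ir_{i+1}<0\}|$ is the number of sign variations. *)

From Stdlib Require Import Reals List.
Import ListNotations.
Open Scope R_scope.

Fixpoint sign_var (l : list R) : nat :=
  match l with
  | x :: ((y :: _) as t) =>
      ((if Rlt_dec (x * y) 0 then 1 else 0) + sign_var t)%nat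
  | _ => 0%nat
  end.

From Stdlib Require Import Reals List Lra Lia Classical ZArith.
Open Scope R_scope.

(* Proof by averaging.  Let L = n_1 ⋯ n_k and look at the L equally spaced
   angles  φ_j = p0 + 2πj/L  (j < L), where the offset p0 ∈ (0, 2π/L) is
   chosen generically, so that no cos(α_i + φ_j n_i) vanishes.
   Fix adjacent indices with n = n_i ≠ m = n_{i+1}; after swapping them we may
   assume m ∤ n.  As m | L, moving from φ_j to φ_{j + L/m} adds 2π/m: the
   factor cos(α_{i+1} + φ m) is unchanged while α_i + φ n runs through an
   arithmetic progression of step 2πn/m.  Along m terms of such a progression
   at least m/4 cosines are negative (resp. positive): if m ∤ 2n this follows
   from 1[c < 0] ≥ (c² - c)/2 and the vanishing of Σ cos(θ + rd) and
   Σ cos(2θ + 2rd); if m | 2n the signs simply alternate.  Hence every adjacent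
   pair changes sign at ≥ L/4 of the grid angles, and some grid angle yields
   at least (k-1)/4 ≥ (k-1)/8 sign variations. *)

Fixpoint rsum (f : nat -> R) (N : nat) : R :=
  match N with O => 0 | S N => rsum f N + f N end.

Lemma rsum_ext (f g : nat -> R) (N : nat) :
  (forall i, (i < N)%nat -> f i = g i) -> rsum f N = rsum g N.
Proof.
  induction N as [|N IH]; simpl; intros H; auto.
  rewrite IH by (intros; apply H; lia). rewrite H by lia. reflexivity.
Qed.

Lemma rsum_le (f g : nat -> R) (N : nat) :
  (forall i, (i < N)%nat -> f i <= g i) -> rsum f N <= rsum g N.
Proof.
  induction N as [|N IH]; simpl; intros H; [lra|].
  assert (rsum f N <= rsum g N) by (apply IH; intros; apply H; lia).
  assert (f N <= g N) by (apply H; lia). lra.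
Qed.

Lemma rsum_lt (f g : nat -> R) (N : nat) : (0 < N)%nat ->
  (forall i, (i < N)%nat -> f i < g i) -> rsum f N < rsum g N.
Proof.
  destruct N as [|N]; simpl; intros HN H; [lia|].
  assert (rsum f N <= rsum g N) by (apply rsum_le; intros; apply Rlt_le, H; lia).
  assert (f N < g N) by (apply H; lia). lra.
Qed.

Lemma rsum_plus (f g : nat -> R) (N : nat) :
  rsum (fun i => f i + g i) N = rsum f N + rsum g N.
Proof. induction N; simpl; lra. Qed.

Lemma rsum_scal (c : R) (f : nat -> R) (N : nat) :
  rsum (fun i => c * f i) N = c * rsum f N.
Proof. induction N as [|N IH]; simpl; [|rewrite IH]; lra. Qed.

Lemma rsum_const (c : R) (N : nat) : rsum (fun _ => c) N = INR N * c.
Proof. induction N as [|N IH]; [simpl; lra|]. rewrite S_INR; simpl; rewrite IH; lra. Qed.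

Lemma rsum_swap (f : nat -> nat -> R) (N M : nat) :
  rsum (fun i => rsum (fun j => f i j) M) N = rsum (fun j => rsum (fun i => f i j) N) M.
Proof.
  induction N as [|N IH]; simpl.
  - induction M; simpl; lra.
  - rewrite IH, <- rsum_plus. reflexivity.
Qed.

Lemma rsum_shift1 (f : nat -> R) (N : nat) :
  rsum f (S N) = f O + rsum (fun i => f (S i)) N.
Proof. induction N as [|N IH]; simpl in *; [|rewrite IH]; lra. Qed.

Lemma rsum_telescope (F : nat -> R) (N : nat) :
  rsum (fun r => F (S r) - F r) N = F N - F O.
Proof. induction N as [|N IH]; simpl; [|rewrite IH]; lra. Qed.

Lemma rsum_period (G : nat -> R) (L : nat) : (forall j, G (j + L)%nat = G j) ->
  forall c, rsum (fun j => G (j + c)%nat) L = rsum G L.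
Proof.
  intros HG c. induction c as [|c IH].
  - apply rsum_ext; intros; rewrite Nat.add_0_r; reflexivity.
  - rewrite <- IH. pose (f := fun j => G (j + c)%nat).
    assert (E : rsum f (S L) = rsum f L + f L) by reflexivity.
    rewrite rsum_shift1 in E.
    assert (Ef : f L = f O) by (unfold f; rewrite Nat.add_comm, HG; reflexivity).
    transitivity (rsum (fun i => f (S i)) L).
    + apply rsum_ext; intros; unfold f; f_equal; lia.
    + fold f. lra.
Qed.

Lemma exists_column_ge (F : nat -> nat -> R) (K L : nat) (c : R) : (0 < L)%nat ->
  (forall i, (i < K)%nat -> rsum (fun j => F i j) L >= INR L * c) ->
  exists j, (j < L)%nat /\ rsum (fun i => F i j) K >= INR K * c.
Proof.
  intros HL Hrows. apply NNPP; intros Hnone.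
  assert (Hcols : rsum (fun j => rsum (fun i => F i j) K) L < rsum (fun _ => INR K * c) L).
  { apply rsum_lt; auto. intros j Hj. apply Rnot_ge_lt. intros Hge. eauto. }
  assert (Hsum : rsum (fun _ => INR L * c) K <= rsum (fun i => rsum (fun j => F i j) L) K)
    by (apply rsum_le; intros; apply Rge_le, Hrows; auto).
  rewrite rsum_swap in Hsum. rewrite !rsum_const in Hcols, Hsum.
  replace (INR K * (INR L * c)) with (INR L * (INR K * c)) in Hsum by ring. lra.
Qed.

Definition neg_ind (x : R) : R := if Rlt_dec x 0 then 1 else 0.

Lemma neg_ind_range (c : R) : 0 <= neg_ind c <= 1.
Proof. unfold neg_ind; destruct (Rlt_dec c 0); lra. Qed.

Lemma neg_ind_quadratic (c : R) : -1 <= c <= 1 -> (c * c - c) / 2 <= neg_ind c.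
Proof. intros H. unfold neg_ind; destruct (Rlt_dec c 0); nra. Qed.

Lemma neg_ind_opp (c : R) : c <> 0 -> neg_ind c + neg_ind (- c) = 1.
Proof. intros. unfold neg_ind; destruct (Rlt_dec c 0), (Rlt_dec (- c) 0); lra. Qed.

Lemma neg_ind_mul_pos (y C : R) : 0 < C -> neg_ind (y * C) = neg_ind y.
Proof. intros. unfold neg_ind; destruct (Rlt_dec (y * C) 0), (Rlt_dec y 0); auto; nra. Qed.

Lemma neg_ind_mul_neg (y C : R) : C < 0 -> neg_ind (y * C) = neg_ind (- y).
Proof. intros. unfold neg_ind; destruct (Rlt_dec (y * C) 0), (Rlt_dec (- y) 0); auto; nra. Qed.

Lemma sin_frac_PI_neq0 (m t : nat) : (0 < m)%nat -> ~ Nat.divide m t ->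
  sin (PI * INR t / INR m) <> 0.
Proof.
  intros Hm Hd E. apply sin_eq_0_0 in E as [z Hz].
  assert (Hm' : INR m <> 0) by (apply not_0_INR; lia).
  assert (Ht : INR t = IZR z * INR m).
  { apply (Rmult_eq_reg_l PI); [|apply PI_neq0].
    replace (PI * INR t) with (PI * INR t / INR m * INR m) by (field; auto).
    rewrite Hz; ring. }
  rewrite !INR_IZR_INZ, <- mult_IZR in Ht. apply eq_IZR in Ht.
  apply Hd. exists (Z.to_nat z). apply Nat2Z.inj.
  rewrite Nat2Z.inj_mul, Z2Nat.id; nia.
Qed.

Lemma cos_progression_sum (th : R) (m t : nat) : (0 < m)%nat -> ~ Nat.divide m t ->
  rsum (fun r => cos (th + INR r * (2 * PI * INR t / INR m))) m = 0.
Proof.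
  intros Hm Hd. set (d := 2 * PI * INR t / INR m).
  assert (Hm' : INR m <> 0) by (apply not_0_INR; lia).
  pose (F := fun r => sin (th + INR r * d - d / 2)).
  assert (Htel : rsum (fun r => 2 * sin (d / 2) * cos (th + INR r * d)) m = F m - F O).
  { rewrite <- rsum_telescope. apply rsum_ext. intros i _. unfold F.
    rewrite S_INR.
    replace (th + (INR i + 1) * d - d / 2) with ((th + INR i * d) + d / 2) by lra.
    rewrite sin_plus, sin_minus. field. }
  assert (Hper : F m = F O).
  { unfold F. simpl INR at 2.
    replace (th + INR m * d - d / 2) with ((th + 0 * d - d / 2) + 2 * INR t * PI)
      by (unfold d; field; auto).
    apply sin_period. }
  assert (Hs : sin (d / 2) <> 0).
  { replace (d / 2) with (PI * INR t / INR m) by (unfold d; field; auto).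
    apply sin_frac_PI_neq0; auto. }
  rewrite rsum_scal, Hper in Htel.
  apply (Rmult_eq_reg_l (2 * sin (d / 2))); lra.
Qed.

(* Negative cosines along a progression θ + r·2πn/m (r < m), m ∤ n.
   Case m ∤ 2n: the quadratic minorant averages to exactly m/4. *)
Lemma neg_count_nondegenerate (th : R) (m n : nat) : (0 < m)%nat ->
  ~ Nat.divide m n -> ~ Nat.divide m (2 * n) ->
  rsum (fun r => neg_ind (cos (th + INR r * (2 * PI * INR n / INR m)))) m >= INR m / 4.
Proof.
  intros Hm H1 H2.
  assert (Hm' : INR m <> 0) by (apply not_0_INR; lia).
  assert (E1 := cos_progression_sum th m n Hm H1).
  assert (E2 := cos_progression_sum (2 * th) m (2 * n) Hm H2).
  assert (Hmin : rsum (fun r => 1 / 4 + (/ 4 * cos (2 * th + INR r * (2 * PI * INR (2 * n) / INR m))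
                   + (- 1 / 2) * cos (th + INR r * (2 * PI * INR n / INR m)))) m
                 <= rsum (fun r => neg_ind (cos (th + INR r * (2 * PI * INR n / INR m)))) m).
  { apply rsum_le. intros r _. set (x := th + INR r * (2 * PI * INR n / INR m)).
    replace (2 * th + INR r * (2 * PI * INR (2 * n) / INR m)) with (2 * x)
      by (unfold x; rewrite mult_INR; simpl (INR 2); field; auto).
    rewrite cos_2a_cos. assert (H := neg_ind_quadratic (cos x) (COS_bound x)). lra. }
  rewrite !rsum_plus, !rsum_scal, rsum_const, E1, E2 in Hmin. lra.
Qed.

(* Along a progression of step π the signs of a nonzero cosine alternate, so
   among m terms at least (m-1)/2 are negative. *)
Lemma neg_count_alternating (th : R) : cos th <> 0 -> forall m,
  2 * rsum (fun r => neg_ind (cos (th + INR r * PI))) m >= INR m - 1 /\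
  2 * rsum (fun r => neg_ind (cos (th + INR r * PI))) (S m) >= INR m.
Proof.
  intros Hth.
  assert (Hflip : forall r, cos (th + INR (S r) * PI) = - cos (th + INR r * PI)).
  { intros r. rewrite S_INR, <- neg_cos. f_equal. ring. }
  assert (Hnz : forall r, cos (th + INR r * PI) <> 0).
  { induction r as [|r IH]; [simpl; rewrite Rmult_0_l, Rplus_0_r; auto|].
    rewrite Hflip. intros E. apply IH. lra. }
  induction m as [|m [IH1 IH2]].
  - simpl. assert (X := neg_ind_range (cos (th + 0 * PI))). lra.
  - rewrite S_INR. split; [lra|].
    change (rsum (fun r => neg_ind (cos (th + INR r * PI))) (S (S m))) with
      (rsum (fun r => neg_ind (cos (th + INR r * PI))) m
       + neg_ind (cos (th + INR m * PI)) + neg_ind (cos (th + INR (S m) * PI))).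
    rewrite Hflip. assert (X := neg_ind_opp _ (Hnz m)). lra.
Qed.

(* Case m | 2n, m ∤ n: the step is an odd multiple of π. *)
Lemma neg_count_degenerate (th : R) (m n : nat) : (0 < m)%nat ->
  ~ Nat.divide m n -> Nat.divide m (2 * n) -> cos th <> 0 ->
  rsum (fun r => neg_ind (cos (th + INR r * (2 * PI * INR n / INR m)))) m >= INR m / 4.
Proof.
  intros Hm H1 [q Hq] Hth.
  assert (Hm' : INR m <> 0) by (apply not_0_INR; lia).
  destruct (Nat.Even_or_Odd q) as [[p Hp]|[p Hp]].
  - exfalso. apply H1. exists p. lia.
  - assert (Hm2 : (2 <= m)%nat).
    { destruct m as [|[|]]; [lia| |lia]. exfalso; apply H1. exists n; lia. }
    assert (Hstep : INR n = (2 * INR p + 1) * INR m / 2).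
    { apply (f_equal INR) in Hq. subst q.
      rewrite !mult_INR, plus_INR, mult_INR in Hq. simpl in Hq. field_simplify. lra. }
    rewrite (rsum_ext _ (fun r => neg_ind (cos (th + INR r * PI)))).
    + destruct (neg_count_alternating th Hth m) as [Halt _].
      apply le_INR in Hm2. simpl in Hm2. lra.
    + intros r _. f_equal. rewrite <- (cos_period (th + INR r * PI) (p * r)).
      f_equal. rewrite Hstep, mult_INR. field. auto.
Qed.

Lemma neg_count_progression (th : R) (m n : nat) : (0 < m)%nat -> ~ Nat.divide m n ->
  (forall r, (r < m)%nat -> cos (th + INR r * (2 * PI * INR n / INR m)) <> 0) ->
  rsum (fun r => neg_ind (cos (th + INR r * (2 * PI * INR n / INR m)))) m >= INR m / 4.
Proof.
  intros Hm Hd Hz. destruct (classic (Nat.divide m (2 * n))) as [H2|H2].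
  - apply neg_count_degenerate; auto.
    specialize (Hz O Hm). simpl INR in Hz. rewrite Rmult_0_l, Rplus_0_r in Hz. auto.
  - apply neg_count_nondegenerate; auto.
Qed.

(* The same count for the sign changes against a fixed nonzero factor C;
   if C < 0 one counts positive cosines, i.e. negative ones shifted by π. *)
Lemma sign_change_count_progression (th C : R) (m n : nat) : (0 < m)%nat ->
  ~ Nat.divide m n -> C <> 0 ->
  (forall r, (r < m)%nat -> cos (th + INR r * (2 * PI * INR n / INR m)) <> 0) ->
  rsum (fun r => neg_ind (cos (th + INR r * (2 * PI * INR n / INR m)) * C)) m >= INR m / 4.
Proof.
  intros Hm Hd HC Hz.
  assert (Hshift : forall r, cos ((th + PI) + INR r * (2 * PI * INR n / INR m))
                             = - cos (th + INR r * (2 * PI * INR n / INR m))).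
  { intros r. rewrite <- neg_cos. f_equal. ring. }
  destruct (Rlt_or_le 0 C) as [Hp|Hn].
  - rewrite (rsum_ext _ (fun r => neg_ind (cos (th + INR r * (2 * PI * INR n / INR m))))).
    + apply neg_count_progression; auto.
    + intros; apply neg_ind_mul_pos; auto.
  - rewrite (rsum_ext _ (fun r => neg_ind (cos ((th + PI) + INR r * (2 * PI * INR n / INR m))))).
    + apply neg_count_progression; auto.
      intros r Hr. rewrite Hshift. intros E. apply (Hz r Hr). lra.
    + intros r _. rewrite neg_ind_mul_neg, Hshift by lra. reflexivity.
Qed.

Definition grid (p0 : R) (L j : nat) : R := p0 + 2 * PI * INR j / INR L.

Lemma cos_shift_periods (a y : R) (q n : nat) :
  cos (a + (y + 2 * PI * INR q) * INR n) = cos (a + y * INR n).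
Proof. rewrite <- (cos_period (a + y * INR n) (q * n)), mult_INR. f_equal. ring. Qed.

Lemma grid_mod (p0 : R) (L j : nat) : (0 < L)%nat ->
  grid p0 L j = grid p0 L (j mod L) + 2 * PI * INR (j / L).
Proof.
  intros HL. unfold grid. rewrite (Nat.div_mod_eq j L) at 1.
  rewrite plus_INR, mult_INR. field. apply not_0_INR; lia.
Qed.

Lemma cos_grid_shift (p0 a : R) (h m j r q : nat) : (0 < h)%nat -> (0 < m)%nat ->
  cos (a + grid p0 (h * m) (j + r * h) * INR q)
  = cos ((a + grid p0 (h * m) j * INR q) + INR r * (2 * PI * INR q / INR m)).
Proof.
  intros Hh Hm. unfold grid. rewrite plus_INR, !mult_INR.
  assert (INR h <> 0) by (apply not_0_INR; lia).
  assert (INR m <> 0) by (apply not_0_INR; lia).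
  f_equal. field. auto.
Qed.

Lemma cos_full_turns (x : R) (r m : nat) : (0 < m)%nat ->
  cos (x + INR r * (2 * PI * INR m / INR m)) = cos x.
Proof.
  intros Hm. rewrite <- (cos_period x r). f_equal.
  field. apply not_0_INR; lia.
Qed.

Lemma grid_range (p0 : R) (L j : nat) : (j < L)%nat -> 0 < p0 < 2 * PI / INR L ->
  0 <= grid p0 L j < 2 * PI.
Proof.
  intros Hj Hp0. assert (HPI := PI_RGT_0).
  assert (HL : 0 < INR L) by (apply lt_0_INR; lia).
  assert (HjL : INR j + 1 <= INR L) by (rewrite <- S_INR; apply le_INR; lia).
  set (q := 2 * PI / INR L).
  assert (Hq : 0 < q) by (apply Rdiv_lt_0_compat; lra).
  assert (HqL : q * INR L = 2 * PI) by (unfold q; field; lra).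
  assert (Hgrid : grid p0 L j = p0 + q * INR j) by (unfold grid, q; field; lra).
  assert (Hj0 := pos_INR j).
  rewrite Hgrid. split; [nra|].
  assert (Hlast : q * (INR j + 1) <= q * INR L) by (apply Rmult_le_compat_l; lra).
  rewrite Rmult_plus_distr_l, Rmult_1_r in Hlast. fold q in Hp0. lra.
Qed.

Lemma grid_sign_changes_oneway (a b p0 : R) (n m L : nat) : (0 < L)%nat -> (0 < m)%nat ->
  Nat.divide m L -> ~ Nat.divide m n ->
  (forall j, cos (a + grid p0 L j * INR n) <> 0) ->
  (forall j, cos (b + grid p0 L j * INR m) <> 0) ->
  rsum (fun j => neg_ind (cos (a + grid p0 L j * INR n) * cos (b + grid p0 L j * INR m))) L
    >= INR L / 4.
Proof.
  intros HL Hm [h Hh] Hd Za Zb.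
  set (G := fun j => neg_ind (cos (a + grid p0 L j * INR n) * cos (b + grid p0 L j * INR m))).
  assert (Hh0 : (0 < h)%nat) by (destruct h; lia).
  assert (Hper : forall j, G (j + L)%nat = G j).
  { intros j. unfold G.
    assert (E : grid p0 L (j + L) = grid p0 L j + 2 * PI * INR 1).
    { unfold grid. rewrite plus_INR. change (INR 1) with 1. field. apply not_0_INR; lia. }
    rewrite E, !cos_shift_periods. reflexivity. }
  (* Double count Σ_{r<m} Σ_{j<L} G (j + r h): each inner sum is a full period
     of G, while for fixed j the terms run along a progression of step 2πn/m. *)
  assert (Hrows : forall j, rsum (fun r => G (j + r * h)%nat) m >= INR m / 4).
  { intros j. unfold G. subst L.
    rewrite (rsum_ext _ (fun r => neg_ind (cos ((a + grid p0 (h * m) j * INR n)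
              + INR r * (2 * PI * INR n / INR m)) * cos (b + grid p0 (h * m) j * INR m)))).
    - apply sign_change_count_progression; auto.
      intros r _. rewrite <- cos_grid_shift; auto.
    - intros r _. rewrite !cos_grid_shift, cos_full_turns by auto. reflexivity. }
  assert (Hshifts : rsum (fun r => rsum (fun j => G (j + r * h)%nat) L) m = INR m * rsum G L).
  { rewrite <- rsum_const. apply rsum_ext. intros. apply rsum_period; auto. }
  assert (Hlow : rsum (fun _ => INR m / 4) L <= rsum (fun j => rsum (fun r => G (j + r * h)%nat) m) L)
    by (apply rsum_le; intros; apply Rge_le, Hrows).
  rewrite <- rsum_swap, Hshifts, rsum_const in Hlow.
  assert (0 < INR m) by (apply lt_0_INR; lia). fold G. nra.
Qed.

Lemma grid_sign_changes (a b p0 : R) (n m L : nat) : (0 < L)%nat -> (0 < n)%nat ->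
  (0 < m)%nat -> n <> m -> Nat.divide n L -> Nat.divide m L ->
  (forall j, cos (a + grid p0 L j * INR n) <> 0) ->
  (forall j, cos (b + grid p0 L j * INR m) <> 0) ->
  rsum (fun j => neg_ind (cos (a + grid p0 L j * INR n) * cos (b + grid p0 L j * INR m))) L
    >= INR L / 4.
Proof.
  intros HL Hn Hm Hnm Dn Dm Za Zb.
  destruct (classic (Nat.divide m n)) as [Hmn|Hmn].
  - assert (Hnm' : ~ Nat.divide n m) by (intros E; apply Hnm, Nat.divide_antisym; auto).
    rewrite (rsum_ext _ (fun j => neg_ind (cos (b + grid p0 L j * INR m)
                                          * cos (a + grid p0 L j * INR n)))).
    + apply grid_sign_changes_oneway; auto.
    + intros; rewrite Rmult_comm; reflexivity.
  - apply grid_sign_changes_oneway; auto.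
Qed.

(* A property is refinable if every nonempty open interval contains a
   nonempty open subinterval on which it holds; such properties are closed
   under finite conjunction, which yields generic offsets. *)
Definition refinable (Q : R -> Prop) : Prop := forall u v, u < v -> exists u' v',
  u <= u' /\ u' < v' /\ v' <= v /\ forall y, u' < y < v' -> Q y.

Lemma refinable_impl (Q1 Q2 : R -> Prop) :
  (forall y, Q1 y -> Q2 y) -> refinable Q1 -> refinable Q2.
Proof.
  intros H R1 u v Huv. destruct (R1 u v Huv) as (u' & v' & A & B & C & D).
  exists u', v'; repeat split; auto.
Qed.

Lemma refinable_forall (Q : nat -> R -> Prop) (K : nat) :
  (forall i, (i < K)%nat -> refinable (Q i)) ->
  refinable (fun y => forall i, (i < K)%nat -> Q i y).
Proof.
  induction K as [|K IH]; intros H u v Huv.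
  - exists u, v. repeat split; try lra. intros; lia.
  - destruct (IH (fun i Hi => H i ltac:(lia)) u v Huv) as (u1 & v1 & A1 & B1 & C1 & D1).
    destruct (H K ltac:(lia) u1 v1 B1) as (u2 & v2 & A2 & B2 & C2 & D2).
    exists u2, v2. repeat split; try lra. intros y Hy i Hi.
    destruct (Nat.eq_dec i K) as [->|]; [apply D2 | apply D1]; auto; lra || lia.
Qed.

Lemma cos_zeros_apart (x y : R) : cos x = 0 -> cos y = 0 -> x < y -> PI <= y - x.
Proof.
  intros Hx Hy Hxy.
  apply cos_eq_0_0 in Hx as [z1 ->]; apply cos_eq_0_0 in Hy as [z2 ->].
  assert (HPI := PI_RGT_0).
  assert (Hz : (z1 < z2)%Z) by (apply lt_IZR; nra).
  assert (Hz' : IZR z1 + 1 <= IZR z2) by (rewrite <- plus_IZR; apply IZR_le; lia).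
  nra.
Qed.

(* An interval of length < π/c contains at most one zero of y ↦ cos (b + y c);
   cut the interval just before it. *)
Lemma refinable_cos_neq0 (b c : R) : 0 < c -> refinable (fun y => cos (b + y * c) <> 0).
Proof.
  intros Hc u v Huv. assert (HPI := PI_RGT_0).
  set (w := Rmin v (u + PI / c)).
  assert (Hw : u < w /\ w <= v /\ (w - u) * c <= PI).
  { assert (Hpc : 0 < PI / c) by (apply Rdiv_lt_0_compat; lra).
    assert (PI / c * c = PI) by (field; lra).
    assert (w <= u + PI / c) by apply Rmin_r.
    repeat split; [apply Rmin_glb_lt; lra | apply Rmin_l | nra]. }
  assert (Hclose : forall y1 y2, u < y1 < y2 -> y2 < w ->
            cos (b + y1 * c) = 0 -> cos (b + y2 * c) = 0 -> False).
  { intros y1 y2 Hy1 Hy2 Z1 Z2.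
    assert (PI <= (b + y2 * c) - (b + y1 * c)) by (apply cos_zeros_apart; auto; nra).
    nra. }
  destruct (classic (exists y0, u < y0 < w /\ cos (b + y0 * c) = 0)) as [[y0 [Hy0 Z0]]|Hnone].
  - exists u, y0. repeat split; try lra. intros y Hy Z. apply (Hclose y y0); auto; lra.
  - exists u, w. repeat split; try lra. intros y Hy Z. apply Hnone. eauto.
Qed.

Fixpoint prod_upto (n : nat -> nat) (t : nat) : nat :=
  match t with O => 1%nat | S t => (prod_upto n t * n (S t))%nat end.

Lemma prod_upto_pos (n : nat -> nat) (t : nat) :
  (forall i, (1 <= i <= t)%nat -> (0 < n i)%nat) -> (0 < prod_upto n t)%nat.
Proof.
  induction t as [|t IH]; simpl; intros H; [lia|].
  assert (0 < prod_upto n t)%nat by (apply IH; intros; apply H; lia).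
  assert (0 < n (S t))%nat by (apply H; lia). nia.
Qed.

Lemma prod_upto_div (n : nat -> nat) (t i : nat) :
  (1 <= i <= t)%nat -> Nat.divide (n i) (prod_upto n t).
Proof.
  induction t as [|t IH]; intros H; [lia|]. simpl.
  destruct (Nat.eq_dec i (S t)) as [->|].
  - apply Nat.divide_mul_r, Nat.divide_refl.
  - apply Nat.divide_mul_l, IH. lia.
Qed.

Lemma generic_offset (alpha : nat -> R) (n : nat -> nat) (k L : nat) : (0 < L)%nat ->
  (forall i, (1 <= i <= k)%nat -> (0 < n i)%nat) ->
  exists p0, 0 < p0 < 2 * PI / INR L /\
    forall i j, (1 <= i <= k)%nat -> cos (alpha i + grid p0 L j * INR (n i)) <> 0.
Proof.
  intros HL Hn. assert (HPI := PI_RGT_0).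
  assert (HL' : 0 < INR L) by (apply lt_0_INR; auto).
  assert (Href : refinable (fun y => forall i, (i < k)%nat -> forall j, (j < L)%nat ->
                   cos (alpha (S i) + grid y L j * INR (n (S i))) <> 0)).
  { apply refinable_forall. intros i Hi. apply refinable_forall. intros j _.
    apply (refinable_impl
             (fun y => cos ((alpha (S i) + 2 * PI * INR j / INR L * INR (n (S i)))
                            + y * INR (n (S i))) <> 0)).
    - intros y Hy. unfold grid. contradict Hy. rewrite <- Hy. f_equal. ring.
    - apply refinable_cos_neq0, lt_0_INR, Hn. lia. }
  destruct (Href 0 (2 * PI / INR L)) as (u & v & A1 & A2 & A3 & A4).
  { apply Rdiv_lt_0_compat; lra. }
  exists ((u + v) / 2). split; [lra|].
  intros i j Hi. replace i with (S (i - 1)) by lia.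
  rewrite grid_mod, cos_shift_periods by lia.
  apply A4; [lra | lia | apply Nat.mod_upper_bound; lia].
Qed.

Lemma sign_var_sum (g : nat -> R) (t : nat) : forall s,
  INR (sign_var (map g (seq s (S t))))
  = rsum (fun i => neg_ind (g (s + i)%nat * g (S (s + i)))) t.
Proof.
  induction t as [|t IH]; intros s; [reflexivity|].
  rewrite rsum_shift1. simpl seq. simpl map.
  change (sign_var (g s :: g (S s) :: map g (seq (S (S s)) t)))
    with ((if Rlt_dec (g s * g (S s)) 0 then 1 else 0)
          + sign_var (map g (seq (S s) (S t))))%nat.
  rewrite plus_INR, IH, Nat.add_0_r. f_equal.
  - unfold neg_ind. destruct (Rlt_dec (g s * g (S s)) 0); reflexivity.
  - apply rsum_ext. intros i _. rewrite <- plus_n_Sm. reflexivity.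
Qed.

Theorem lemma5p5 (k : nat) (alpha : nat -> R) (n : nat -> nat)
  (hk : (2 <= k)%nat)
  (halpha : forall i, (1 <= i <= k)%nat -> 0 <= alpha i < 2 * PI)
  (hn : forall i, (1 <= i <= k)%nat -> (0 < n i)%nat)
  (hneq : forall i, (1 <= i <= k - 1)%nat -> n i <> n (S i)) :
  exists phi : R, 0 <= phi < 2 * PI /\
    INR (sign_var (map (fun i => cos (alpha i + phi * INR (n i))) (seq 1 k)))
      >= (INR k - 1) / 8.
Proof.
  set (L := prod_upto n k).
  assert (HL : (0 < L)%nat) by (apply prod_upto_pos; auto).
  destruct (generic_offset alpha n k L HL hn) as (p0 & Hp0 & Hnz).
  set (c := fun j i => cos (alpha i + grid p0 L j * INR (n i))).
  assert (Hpairs : forall i, (i < k - 1)%nat ->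
            rsum (fun j => neg_ind (c j (S i) * c j (S (S i)))) L >= INR L * (1 / 4)).
  { intros i Hi. unfold c. replace (INR L * (1 / 4)) with (INR L / 4) by field.
    apply grid_sign_changes; auto; try (apply hn; lia); try (apply hneq; lia);
      try (apply prod_upto_div; lia); intros j; apply Hnz; lia. }
  destruct (exists_column_ge _ _ _ _ HL Hpairs) as (j & Hj & Hgood).
  exists (grid p0 L j). split; [apply grid_range; auto|].
  replace k with (S (k - 1)) at 1 by lia. rewrite sign_var_sum.
  rewrite minus_INR in Hgood by lia. simpl INR in Hgood.
  assert (1 <= INR k) by (apply (le_INR 1 k); lia).
  unfold c in Hgood; cbv beta in Hgood. simpl. lra.
Qed.
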